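(* For any simplicial map $a:X'\to X$, the functor $a^*:\mathrm{Comod}_{X_+}\to\mathrm{Comod}_{X'_+}$ (right adjoint to the pushforward $a_*$) preserves pushouts.
   Context: For a simplicial set $X$, $X_+$ is $X$ with a disjoint basepoint, and $\mathrm{Comod}_{X_+}$ is the category of right $X_+$-comodules: pointed simplicial sets $Y$ with pointed coassociative, counital maps $\rho:Y\to Y\wedge X_+$ (coassociativity with respect to the diagonal of $X$, counitality with respect to $X_+\to S^0$), and coaction-preserving pointed maps. For $a:X'\to X$, the pushforward is $a_*(Y,\rho)=(Y,(Y\wedge a_+)\rho)$; its right adjoint $a^*$ sends $(Y,\rho)$ to the pullback $a^*Y$ of $Y\xrightarrow{\rho}Y\wedge X_+\xleftarrow{Y\wedge a_+}Y\wedge X'_+$, regarded as a sub-simplicial set of $Y\wedge X'_+$, with $X'_+$-coaction restricted from the cofree coaction on $Y\wedge X'_+$. *)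

From Stdlib Require Import ClassicalEpsilon ProofIrrelevance.
From mathcomp Require Import all_boot.
Set Implicit Arguments. Unset Strict Implicit. Unset Printing Implicit Defensive.

(** * The simplex category: morphisms [m] -> [n] are monotone maps
    {0..m} -> {0..n}. *)
Definition monotone_ord (m n : nat) (f : 'I_m.+1 -> 'I_n.+1) : Prop :=
  forall i j : 'I_m.+1, i <= j -> f i <= f j.
Definition Dmap (m n : nat) : Type := {f : 'I_m.+1 -> 'I_n.+1 | monotone_ord f}.

Definition did (n : nat) : Dmap n n :=
  exist (@monotone_ord n n) (fun i => i) (fun i j h => h).
Definition dcomp (m n p : nat) (g : Dmap n p) (f : Dmap m n) : Dmap m p :=
  exist (@monotone_ord m p) (fun i => proj1_sig g (proj1_sig f i))
    (fun i j h => proj2_sig g _ _ (proj2_sig f _ _ h)).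

(** * Simplicial sets (contravariant functors Delta^op -> Type) *)
Record sset := SSet {
  sobj :> nat -> Type;
  sact : forall m n, Dmap m n -> sobj n -> sobj m;
  sact_id : forall n x, sact (did n) x = x;
  sact_comp : forall m n p (g : Dmap n p) (f : Dmap m n) x,
      sact (dcomp g f) x = sact f (sact g x) }.
Arguments sact {s m n} _ _.

Record smap (X Y : sset) := SMap {
  smfun :> forall n, X n -> Y n;
  smnat : forall m n (f : Dmap m n) (x : X n), smfun (sact f x) = sact f (smfun x) }.
Arguments smfun {X Y} s n _.
Arguments smnat {X Y} s {m n} f x.

Record psset := PSSet {
  pss :> sset;
  ptt : forall n, pss n;
  sact_pt : forall m n (f : Dmap m n), sact f (ptt n) = ptt m }.

Record pmap (Y Z : psset) := PMap {
  pm :> smap Y Z;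
  pm_pt : forall n, pm n (ptt Y n) = ptt Z n }.

Lemma sig_eqP (A : Type) (P : A -> Prop) (u v : {a : A | P a}) :
  proj1_sig u = proj1_sig v -> u = v.
Proof.
case: u => a pa; case: v => b pb /= e; subst b; f_equal; exact: proof_irrelevance.
Qed.

Definition sid (X : sset) : smap X X := @SMap X X (fun n x => x) (fun m n f x => erefl).
Definition pid (Y : psset) : pmap Y Y := @PMap Y Y (sid Y) (fun n => erefl).

Definition sprod (X : sset) : sset.
Proof.
refine (@SSet (fun n => (X n * X n)%type)
   (fun m n f p => (sact f p.1, sact f p.2)) _ _).
- by move=> n [x1 x2] /=; rewrite !sact_id.
- by move=> m n p g f [x1 x2] /=; rewrite !sact_comp.
Defined.

Definition sdiag (X : sset) : smap X (sprod X) :=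
  @SMap X (sprod X) (fun n x => (x, x)) (fun m n f x => erefl).

(** * The smash product Y /\ X_+ .
    An n-simplex is either the basepoint ([None]) or a pair (y, x) with
    y a non-basepoint n-simplex of Y and x an n-simplex of X;
    (y, x) with y = * is identified with the basepoint. *)
Section Smash.
Variables (Y : psset) (X : sset).

Definition smo n := option {p : (Y n * X n)%type | p.1 <> ptt Y n}.

(** the class [y /\ x] of (y, x) in Y /\ X_+ *)
Definition smk n (y : Y n) (x : X n) : smo n :=
  match excluded_middle_informative (y = ptt Y n) with
  | left _ => None
  | right h => Some (exist (fun p : (Y n * X n)%type => p.1 <> ptt Y n) (y, x) h)
  end.

Lemma smk_pt n (x : X n) : smk (ptt Y n) x = None.
Proof. by rewrite /smk; case: excluded_middle_informative. Qed.

Lemma smk_Some n (s : {p : (Y n * X n)%type | p.1 <> ptt Y n}) :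
  Some s = smk (proj1_sig s).1 (proj1_sig s).2.
Proof.
case: s => -[y x] h /=; rewrite /smk.
case: excluded_middle_informative => h'; first by case: h.
by congr Some; apply: sig_eqP.
Qed.

Lemma smk_np n (y : Y n) (x : X n) (h : (y, x).1 <> ptt Y n) :
  smk y x = Some (exist (fun p : (Y n * X n)%type => p.1 <> ptt Y n) (y, x) h).
Proof.
rewrite /smk; case: excluded_middle_informative => [e|h']; first by case: h.
by congr Some; apply: sig_eqP.
Qed.

Lemma match_smk (T : Type) n (y : Y n) (x : X n) (d : T) (F : (Y n * X n)%type -> T) :
  match smk y x with None => d | Some s => F (proj1_sig s) end =
  match excluded_middle_informative (y = ptt Y n) with
  | left _ => d | right _ => F (y, x) end.
Proof. by rewrite /smk; case: excluded_middle_informative. Qed.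

Definition smact m n (f : Dmap m n) (z : smo n) : smo m :=
  match z with
  | None => None
  | Some s => smk (sact f (proj1_sig s).1) (sact f (proj1_sig s).2)
  end.

Lemma smact_smk m n (f : Dmap m n) (y : Y n) (x : X n) :
  smact f (smk y x) = smk (sact f y) (sact f x).
Proof.
rewrite /smact {1}/smk; case: excluded_middle_informative => [->|h] //=.
by rewrite sact_pt smk_pt.
Qed.

Definition smash_sset : sset.
Proof.
refine (@SSet smo smact _ _).
- move=> n [s|] //; rewrite smk_Some /smact /=.
  by rewrite -smk_Some !sact_id -smk_Some.
- move=> m n p g f [s|] //; rewrite /smact -/(smact g (Some s)).
  by rewrite !sact_comp -smact_smk.
Defined.

Definition smash : psset.
Proof. by refine (@PSSet smash_sset (fun n => None) _). Defined.

Lemma sact_smk m n (f : Dmap m n) (y : Y n) (x : X n) :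
  @sact smash m n f (smk y x) = smk (sact f y) (sact f x).
Proof. exact: smact_smk. Qed.

(** counit  Y /\ X_+ -> Y /\ S^0 = Y, induced by X_+ -> S^0 *)
Definition scu n (z : smo n) : Y n :=
  match z with None => ptt Y n | Some s => (proj1_sig s).1 end.

Lemma scu_smk n (y : Y n) (x : X n) : scu (smk y x) = y.
Proof. by rewrite /scu /smk; case: excluded_middle_informative. Qed.

End Smash.

Section SmashMap.
Variables (Y Z : psset) (X X' : sset) (phi : pmap Y Z) (g : smap X X').

Definition smmapf n (z : smo Y X n) : smo Z X' n :=
  match z with
  | None => None
  | Some s => smk (phi n (proj1_sig s).1) (g n (proj1_sig s).2)
  end.

Lemma smmap_smk n (y : Y n) (x : X n) :
  smmapf (smk y x) = smk (phi n y) (g n x).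
Proof.
rewrite /smmapf {1}/smk; case: excluded_middle_informative => [->|h] //=.
by rewrite pm_pt smk_pt.
Qed.

Definition smmap_s : smap (smash Y X) (smash Z X').
Proof.
refine (@SMap (smash Y X) (smash Z X') smmapf _).
move=> m n f [s|] //; rewrite [Some s]smk_Some.
rewrite (sact_smk (Y:=Y) (X:=X) f) !smmap_smk (sact_smk (Y:=Z) (X:=X') f).
by rewrite !smnat.
Defined.

Definition smmap : pmap (smash Y X) (smash Z X').
Proof. by refine (@PMap _ _ smmap_s _). Defined.

End SmashMap.

(** canonical isomorphism  (Y /\ X_+) /\ X_+  ~  Y /\ (X x X)_+ *)
Definition sassoc (Y : psset) (X : sset) n (z : smo (smash Y X) X n)
  : smo Y (sprod X) n :=
  match z with
  | None => None
  | Some s =>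
      match (proj1_sig s).1 with
      | None => None
      | Some s' => @smk Y (sprod X) n (proj1_sig s').1
                                     ((proj1_sig s').2, (proj1_sig s).2)
      end
  end.

(** * Right comodules over X_+ *)
Record comod (X : sset) := Comod {
  cY :> psset;
  coact : pmap cY (smash cY X);
  coassoc : forall n (y : cY n),
      sassoc (smmap coact (sid X) n (coact n y)) =
      smmap (pid cY) (sdiag X) n (coact n y);
  counit : forall n (y : cY n), scu (coact n y) = y }.

Record cmor (X : sset) (A B : comod X) := CMor {
  cm :> pmap A B;
  cm_co : forall n (y : A n),
      coact B n (cm n y) = smmap cm (sid X) n (coact A n y) }.

(** pushout squares in Comod_{X_+}:
<<
      A --f1--> B
      |         |
     f2         g1
      v         v
      C --g2--> D
>>  *)
Definition is_pushout (X : sset) (A B C D : comod X)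
  (f1 : cmor A B) (f2 : cmor A C) (g1 : cmor B D) (g2 : cmor C D) : Prop :=
  (forall n (x : A n), g1 n (f1 n x) = g2 n (f2 n x)) /\
  forall (W : comod X) (h1 : cmor B W) (h2 : cmor C W),
    (forall n (x : A n), h1 n (f1 n x) = h2 n (f2 n x)) ->
    exists u : cmor D W,
      (forall n x, u n (g1 n x) = h1 n x) /\
      (forall n x, u n (g2 n x) = h2 n x) /\
      (forall v : cmor D W,
          (forall n x, v n (g1 n x) = h1 n x) ->
          (forall n x, v n (g2 n x) = h2 n x) ->
          forall n x, v n x = u n x).

Lemma sm_case (Y : psset) (X : sset) n (z : smo Y X n) :
  z = None \/ exists (y : Y n) (x : X n), z = smk y x.
Proof. case: z => [s|]; last by left. by right; do 2 eexists; exact: smk_Some. Qed.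

Lemma sassoc_smk (Y : psset) (X : sset) n (y : Y n) (x1 x2 : X n) :
  sassoc (@smk (smash Y X) X n (smk y x1) x2) = @smk Y (sprod X) n y (x1, x2).
Proof.
case: (excluded_middle_informative (y = ptt Y n)) => [->|h].
  by rewrite smk_pt (smk_pt (smash Y X)) smk_pt.
rewrite (smk_np h).
have h2 : (Some (exist (fun p : (Y n * X n)%type => p.1 <> ptt Y n) (y, x1) h), x2).1
          <> ptt (smash Y X) n by [].
by rewrite (@smk_np (smash Y X) X n _ x2 h2).
Qed.

(** * The pullback functor a^* : Comod_{X_+} -> Comod_{X'_+} *)
Section Pullback.
Variables (X X' : sset) (a : smap X' X).

Section Obj.
Variable (Y : comod X).

(** a^*Y : the pullback of  Y --rho--> Y /\ X_+ <--Y /\ a_+-- Y /\ X'_+ *)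
Definition pbo n :=
  {p : (Y n * smo Y X' n)%type | coact Y n p.1 = smmap (pid Y) a n p.2}.

Lemma pbact_proof m n (f : Dmap m n) (w : pbo n) :
  coact Y m (sact f (proj1_sig w).1) =
  smmap (pid Y) a m (@sact (smash Y X') m n f (proj1_sig w).2).
Proof. by rewrite smnat (proj2_sig w) -smnat. Qed.

Definition pbact m n (f : Dmap m n) (w : pbo n) : pbo m :=
  exist _ (sact f (proj1_sig w).1, @sact (smash Y X') m n f (proj1_sig w).2)
    (pbact_proof f w).

Definition pb_sset : sset.
Proof.
refine (@SSet pbo pbact _ _).
- move=> n w; apply: sig_eqP; rewrite /pbact; cbn [proj1_sig].
  by rewrite !sact_id; case: (proj1_sig w).
- move=> m n p g f w; apply: sig_eqP; rewrite /pbact; cbn [proj1_sig].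
  by rewrite !sact_comp.
Defined.

Lemma pbpt_proof n : coact Y n (ptt Y n) = smmap (pid Y) a n None.
Proof. by rewrite pm_pt. Qed.

Definition pb_ps : psset.
Proof.
refine (@PSSet pb_sset (fun n => exist _ (ptt Y n, None) (pbpt_proof n)) _).
by move=> m n f; apply: sig_eqP; rewrite /= sact_pt.
Defined.

Lemma pb_none n (w : pbo n) : (proj1_sig w).2 = None -> w = ptt pb_ps n.
Proof.
move=> e; apply: sig_eqP => /=; case: w e => -[y z] /= h e; subst z.
by rewrite -(counit y) h.
Qed.

(** the coaction restricted from the cofree coaction on Y /\ X'_+ *)
Definition pbcof n (w : pbo n) : smo pb_ps X' n :=
  match (proj1_sig w).2 with
  | None => None
  | Some s => @smk pb_ps X' n w (proj1_sig s).2
  end.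

Lemma pbcof_none n (w : pbo n) : (proj1_sig w).2 = None -> pbcof w = None.
Proof. by rewrite /pbcof => ->. Qed.

Lemma pbcof_smk n (w : pbo n) y x :
  (proj1_sig w).2 = smk y x -> pbcof w = @smk pb_ps X' n w x.
Proof.
rewrite /pbcof => e; rewrite e.
case: (excluded_middle_informative (y = ptt Y n)) => [ey|ny].
  have ew : w = ptt pb_ps n by apply: pb_none; rewrite e ey smk_pt.
  by rewrite ey smk_pt ew (smk_pt pb_ps).
by rewrite /smk; case: excluded_middle_informative.
Qed.

Definition pbco_s : smap pb_ps (smash pb_ps X').
Proof.
refine (@SMap pb_ps (smash pb_ps X') pbcof _).
move=> m n f w.
case: (sm_case (proj1_sig w).2) => [e|[y [x e]]].
  rewrite (pbcof_none e) pbcof_none //= e //.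
rewrite (pbcof_smk e) (sact_smk (Y := pb_ps)).
by apply: pbcof_smk; rewrite /= e smact_smk.
Defined.

Definition pbco : pmap pb_ps (smash pb_ps X').
Proof. by refine (@PMap _ _ pbco_s _). Defined.

Definition pb : comod X'.
Proof.
refine (@Comod X' pb_ps pbco _ _).
- move=> n w.
  case: (sm_case (proj1_sig w).2) => [e|[y [x e]]].
    by rewrite /= (pbcof_none e).
  rewrite /= (pbcof_smk e) (smmap_smk (Y := pb_ps)) /=.
  rewrite (pbcof_smk e) sassoc_smk.
  by rewrite (smmap_smk (Y := pb_ps)).
- move=> n w.
  case: (sm_case (proj1_sig w).2) => [e|[y [x e]]].
    by rewrite /= (pbcof_none e) (pb_none e).
  by rewrite /= (pbcof_smk e) scu_smk.
Defined.

End Obj.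

Lemma smmap_swap (Y Z : psset) (phi : pmap Y Z) n (z : smo Y X' n) :
  smmap phi (sid X) n (smmap (pid Y) a n z) = smmap (pid Z) a n (smmap phi (sid X') n z).
Proof.
case: (sm_case z) => [->|[y [x ->]]] //.
by rewrite /= !smmap_smk.
Qed.

Section Mor.
Variables (Y Z : comod X) (phi : cmor Y Z).

Lemma pbm_proof n (w : pbo Y n) :
  coact Z n (phi n (proj1_sig w).1) =
  smmap (pid Z) a n (smmap phi (sid X') n (proj1_sig w).2).
Proof. by rewrite cm_co (proj2_sig w) smmap_swap. Qed.

Definition pbmf n (w : pbo Y n) : pbo Z n :=
  exist _ (phi n (proj1_sig w).1, smmap phi (sid X') n (proj1_sig w).2) (pbm_proof w).

Definition pbm_s : smap (pb_ps Y) (pb_ps Z).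
Proof.
refine (@SMap (pb_ps Y) (pb_ps Z) pbmf _).
move=> m n f w; apply: sig_eqP; rewrite /=; congr pair; [exact: smnat | exact: (smnat (smmap phi (sid X')) f)].
Defined.

Definition pbm_p : pmap (pb_ps Y) (pb_ps Z).
Proof.
refine (@PMap _ _ pbm_s _).
by move=> n; apply: sig_eqP; rewrite /= pm_pt.
Defined.

Definition pbmor : cmor (pb Y) (pb Z).
Proof.
refine (@CMor X' (pb Y) (pb Z) pbm_p _).
move=> n w.
case: (sm_case (proj1_sig w).2) => [e|[y [x e]]].
  by rewrite /= (pbcof_none e) pbcof_none //= e.
rewrite /= (pbcof_smk e) (smmap_smk (Y := pb_ps Y)).
by apply: pbcof_smk; rewrite /= e smmap_smk.
Defined.

End Mor.
End Pullback.

(** Pushouts of [X_+]-comodules are computed levelwise: a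
    commutative square [B <- A -> C], [B -> D <- C] is a pushout iff in every
    degree the copairing [B n + C n -> D n] is surjective and its kernel is
    the equivalence relation generated by [f1 x ~ f2 x] (a "levelwise
    pushout").
    - One direction builds the glued comodule (the levelwise quotient, whose
      coaction is induced from those of [B] and [C]) and compares it with [D]
      through the universal property.
    - The other direction descends a cocone along the surjection
      [B n + C n -> D n].
    Then [a^*] preserves levelwise pushouts: a non-basepoint simplex of [a^*Y]
    is a pair [(y, y /\ x')] whose label [x'] lifts the label of [y], comodule
    maps act on such pairs through [y] alone, and so every gluing chain (and
    every preimage) in the original square lifts to the pulled-back one. *)

From Pilot Require Import Defs.
From mathcomp Require Import all_boot.
From Stdlib Require Import ClassicalEpsilon ProofIrrelevance.
From Stdlib Require Import FunctionalExtensionality PropExtensionality.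
(* Re-import so that [pmap] denotes pointed simplicial maps, not mathcomp's
   partial map on sequences. *)
Import Defs.
Set Implicit Arguments. Unset Strict Implicit. Unset Printing Implicit Defensive.

Lemma smk_inj (Y : psset) (X : sset) n (y : Y n) (x1 x2 : X n) :
  y <> ptt Y n -> smk y x1 = smk y x2 -> x1 = x2.
Proof.
move=> ny; have h1 : (y, x1).1 <> ptt Y n by [].
have h2 : (y, x2).1 <> ptt Y n by [].
rewrite (smk_np h1) (smk_np h2).
by move/(congr1 (fun o => if o is Some s then (proj1_sig s).2 else x1)).
Qed.

Definition pmcomp (Y Z W : psset) (p : pmap Y Z) (q : pmap Z W) : pmap Y W :=
  @PMap Y W
    (@SMap Y W (fun n y => q n (p n y))
       (fun m n f y => etrans (f_equal (q m) (smnat p f y)) (smnat q f (p n y))))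
    (fun n => etrans (f_equal (q n) (pm_pt p n)) (pm_pt q n)).

Section SmashFunctor.
Variables (X : sset) (Y Z W : psset).

Lemma smmap_id n (z : smo Y X n) : smmap (pid Y) (sid X) n z = z.
Proof. by case: (sm_case z) => [->|[y [x ->]]] //=; rewrite smmap_smk. Qed.

Lemma smmap_comp (p : pmap Y Z) (q : pmap Z W) n (z : smo Y X n) :
  smmap q (sid X) n (smmap p (sid X) n z) = smmap (pmcomp p q) (sid X) n z.
Proof. by case: (sm_case z) => [->|[y [x ->]]] //=; rewrite !smmap_smk. Qed.

Lemma smmap_ext (p q : pmap Y Z) n (z : smo Y X n) :
  (forall y, p n y = q n y) -> smmap p (sid X) n z = smmap q (sid X) n z.
Proof. by move=> e; case: (sm_case z) => [->|[y [x ->]]] //=; rewrite !smmap_smk e. Qed.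

End SmashFunctor.

Section Comodules.
Variable X : sset.

(** By counitality, a comodule coaction sends the basepoint to the basepoint and
    every other simplex [y] to [y /\ x] for some "label" [x]. *)
Lemma coact_label (Y : comod X) n (y : Y n) :
  (y = ptt Y n /\ coact Y n y = None) \/ exists x, coact Y n y = smk y x.
Proof.
case: (sm_case (coact Y n y)) => [e|[y' [x e]]].
  by left; split=> //; rewrite -(counit y) e.
by right; exists x; have := counit y; rewrite e scu_smk => ->.
Qed.

Definition cid (Y : comod X) : cmor Y Y.
Proof. by refine (@CMor X Y Y (pid Y) _) => n y; rewrite smmap_id. Defined.

Definition ccomp (Y Z W : comod X) (p : cmor Y Z) (q : cmor Z W) : cmor Y W.
Proof.
refine (@CMor X Y W (pmcomp p q) _) => n y.
by rewrite /= !cm_co smmap_comp.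
Defined.

(** Conversely, a pointed map [c : Z -> Z /\ X_+] which labels every
    non-basepoint simplex is automatically coassociative and counital: this is
    how we equip quotients with a comodule structure. *)
Section Labelled.
Variables (Z : psset) (c : pmap Z (smash Z X)).
Hypothesis c_label :
  forall n (z : Z n), (z = ptt Z n /\ c n z = None) \/ exists x, c n z = smk z x.

Lemma labelled_coassoc n (z : Z n) :
  sassoc (smmap c (sid X) n (c n z)) = smmap (pid Z) (sdiag X) n (c n z).
Proof.
case: (c_label z) => [[_ ->]|[x e]] //.
by rewrite e /= !smmap_smk /= e sassoc_smk.
Qed.

Lemma labelled_counit n (z : Z n) : scu (c n z) = z.
Proof. by case: (c_label z) => [[-> ->]|[x ->]] //; rewrite scu_smk. Qed.

Definition labelled_comod : comod X := @Comod X Z c labelled_coassoc labelled_counit.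

End Labelled.
End Comodules.

Definition sum_act (Y Z : sset) m n (f : Dmap m n) (p : (Y n + Z n)%type)
  : (Y m + Z m)%type :=
  match p with inl y => inl (sact f y) | inr z => inr (sact f z) end.

Lemma sum_act_id (Y Z : sset) n (p : (Y n + Z n)%type) : sum_act (did n) p = p.
Proof. by case: p => [y|z] /=; rewrite sact_id. Qed.

Lemma sum_act_comp (Y Z : sset) m n k (g : Dmap n k) (f : Dmap m n)
    (p : (Y k + Z k)%type) :
  sum_act (dcomp g f) p = sum_act f (sum_act g p).
Proof. by case: p => [y|z] /=; rewrite sact_comp. Qed.

Definition copair (Y Z W : sset) (g1 : smap Y W) (g2 : smap Z W) n
    (p : (Y n + Z n)%type) : W n :=
  match p with inl y => g1 n y | inr z => g2 n z end.

Lemma copair_act (Y Z W : sset) (g1 : smap Y W) (g2 : smap Z W) m n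
    (f : Dmap m n) (p : (Y n + Z n)%type) :
  copair g1 g2 (sum_act f p) = sact f (copair g1 g2 p).
Proof. by case: p => [y|z] /=; rewrite smnat. Qed.

(** The gluing relation of a span [B <-f1- A -f2-> C]: the equivalence
    relation on [B n + C n] generated by [f1 x ~ f2 x].  Its quotient is the
    pushout of the underlying pointed simplicial sets. *)
Section Gluing.
Variables (X : sset) (A B C : comod X) (f1 : cmor A B) (f2 : cmor A C).

Inductive glued n : (B n + C n)%type -> (B n + C n)%type -> Prop :=
| glued_gen (x : A n) : glued (inl (f1 n x)) (inr (f2 n x))
| glued_refl p : glued p p
| glued_sym p q : glued p q -> glued q p
| glued_trans p q r : glued p q -> glued q r -> glued p r.

Definition sum_pt n : (B n + C n)%type := inl (ptt B n).

Lemma glued_pt n : glued (inl (ptt B n)) (inr (ptt C n)).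
Proof. by have := glued_gen (ptt A n); rewrite !pm_pt. Qed.

Lemma glued_act m n (f : Dmap m n) p q : glued p q -> glued (sum_act f p) (sum_act f q).
Proof.
elim=> {p q} [x|p|p q _ IH|p q r _ IH1 _ IH2] /=.
- by rewrite -!smnat; apply: glued_gen.
- exact: glued_refl.
- exact: glued_sym.
- exact: glued_trans IH1 IH2.
Qed.

Lemma copair_glued (W : comod X) (h1 : cmor B W) (h2 : cmor C W) :
  (forall n x, h1 n (f1 n x) = h2 n (f2 n x)) ->
  forall n p q, glued p q -> copair h1 h2 p = copair h1 h2 q :> W n.
Proof. by move=> hA n p q; elim=> {p q} //= p q r _ -> _ ->. Qed.

(** ** The glued comodule
    Its [n]-simplices are the gluing classes of [B n + C n]; the coaction of a
    class is induced from the coactions of [B] and [C], which is well defined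
    since [f1] and [f2] preserve coactions. *)
Definition gclass n := {S : (B n + C n)%type -> Prop | exists p, S = @glued n p}.
Definition cls n (p : (B n + C n)%type) : gclass n :=
  exist _ (glued p) (ex_intro _ p erefl).
Definition rep n (S : gclass n) : (B n + C n)%type :=
  proj1_sig (constructive_indefinite_description _ (proj2_sig S)).

Lemma rep_spec n (S : gclass n) : proj1_sig S = glued (rep S).
Proof. exact: (proj2_sig (constructive_indefinite_description _ (proj2_sig S))). Qed.

Lemma cls_eq n (p q : (B n + C n)%type) : glued p q -> cls p = cls q.
Proof.
move=> pq; apply: sig_eqP; apply: functional_extensionality => r.
apply: propositional_extensionality; split=> h.
- exact: glued_trans (glued_sym pq) h.
- exact: glued_trans pq h.
Qed.

Lemma cls_inj n (p q : (B n + C n)%type) : cls p = cls q -> glued p q.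
Proof. by move/(congr1 (@proj1_sig _ _)) => /= ->; apply: glued_refl. Qed.

Lemma cls_surj n (S : gclass n) : exists p, S = cls p.
Proof. by exists (rep S); apply: sig_eqP; rewrite rep_spec. Qed.

Lemma rep_cls n (p : (B n + C n)%type) : glued (rep (cls p)) p.
Proof. by apply: cls_inj; apply: sig_eqP; rewrite /= -rep_spec. Qed.

Definition gact m n (f : Dmap m n) (S : gclass n) : gclass m := cls (sum_act f (rep S)).

Lemma gact_cls m n (f : Dmap m n) p : gact f (cls p) = cls (sum_act f p).
Proof. by apply: cls_eq; apply: glued_act; apply: rep_cls. Qed.

Definition glue_sset : sset.
Proof.
refine (@SSet gclass gact _ _).
- by move=> n S; case: (cls_surj S) => p ->; rewrite gact_cls sum_act_id.
- by move=> m n k g f S; case: (cls_surj S) => p ->; rewrite !gact_cls sum_act_comp.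
Defined.

Definition glue_ps : psset.
Proof.
refine (@PSSet glue_sset (fun n => cls (sum_pt n)) _).
by move=> m n f; rewrite /= gact_cls /= sact_pt.
Defined.

Definition inj1_p : pmap B glue_ps.
Proof.
unshelve refine (@PMap B glue_ps (@SMap B glue_ps (fun n b => cls (inl b)) _) _) => //.
by move=> m n f b /=; rewrite gact_cls.
Defined.

Definition inj2_p : pmap C glue_ps.
Proof.
unshelve refine (@PMap C glue_ps (@SMap C glue_ps (fun n c => cls (inr c)) _) _).
- by move=> m n f c /=; rewrite gact_cls.
- by move=> n /=; apply: cls_eq; apply: glued_sym; apply: glued_pt.
Defined.

Lemma inj_glued n (x : A n) : inj1_p n (f1 n x) = inj2_p n (f2 n x).
Proof. by apply: cls_eq; apply: glued_gen. Qed.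

Definition gco_rep n (p : (B n + C n)%type) : smo glue_ps X n :=
  match p with
  | inl b => smmap inj1_p (sid X) n (coact B n b)
  | inr c => smmap inj2_p (sid X) n (coact C n c)
  end.

Lemma gco_rep_glued n (p q : (B n + C n)%type) : glued p q -> gco_rep p = gco_rep q.
Proof.
elim=> {p q} [x|p|p q _ IH|p q r _ IH1 _ IH2] //; last by rewrite IH1 IH2.
rewrite /gco_rep (cm_co f1) (cm_co f2) !smmap_comp.
by apply: smmap_ext => y; apply: inj_glued.
Qed.

Lemma gco_rep_act m n (f : Dmap m n) (p : (B n + C n)%type) :
  gco_rep (sum_act f p) = @sact (smash glue_ps X) m n f (gco_rep p).
Proof.
by case: p => [b|c]; rewrite /= (smnat (coact _)); apply: (smnat (smmap _ (sid X))).
Qed.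

Definition gco n (S : gclass n) : smo glue_ps X n := gco_rep (rep S).

Lemma gco_cls n (p : (B n + C n)%type) : gco (cls p) = gco_rep p.
Proof. by apply: gco_rep_glued; apply: rep_cls. Qed.

Definition gco_p : pmap glue_ps (smash glue_ps X).
Proof.
unshelve refine (@PMap _ _ (@SMap glue_ps (smash glue_ps X) gco _) _).
- move=> m n f S; case: (cls_surj S) => p ->.
  by rewrite /= gact_cls !gco_cls gco_rep_act.
- by move=> n; rewrite /= gco_cls /= pm_pt.
Defined.

Lemma gco_label n (S : glue_ps n) :
  (S = ptt glue_ps n /\ gco_p n S = None) \/ exists x, gco_p n S = smk S x.
Proof.
case: (cls_surj S) => -[b|c] ->; rewrite /= gco_cls /=.
- case: (coact_label b) => [[-> ->]|[x ->]]; first by left.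
  by right; exists x; rewrite smmap_smk.
- case: (coact_label c) => [[-> ->]|[x ->]].
    by left; split=> //; apply: (pm_pt inj2_p).
  by right; exists x; rewrite smmap_smk.
Qed.

Definition glue : comod X := labelled_comod gco_label.

Lemma coact_glue_cls n (p : (B n + C n)%type) : coact glue n (cls p) = gco_rep p.
Proof. exact: gco_cls. Qed.

Definition inj1 : cmor B glue.
Proof.
by refine (@CMor X B glue inj1_p _) => n b; apply: (coact_glue_cls (inl b)).
Defined.

Definition inj2 : cmor C glue.
Proof.
by refine (@CMor X C glue inj2_p _) => n c; apply: (coact_glue_cls (inr c)).
Defined.

End Gluing.

Definition levelwise_pushout (X : sset) (A B C D : comod X)
    (f1 : cmor A B) (f2 : cmor A C) (g1 : cmor B D) (g2 : cmor C D) : Prop :=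
  [/\ forall n x, g1 n (f1 n x) = g2 n (f2 n x),
      forall n (d : D n), exists p, copair g1 g2 p = d &
      forall n (p q : (B n + C n)%type),
        copair g1 g2 p = copair g1 g2 q -> glued f1 f2 p q].

Section Comparison.
Variables (X : sset) (A B C D : comod X).
Variables (f1 : cmor A B) (f2 : cmor A C) (g1 : cmor B D) (g2 : cmor C D).
Hypothesis comm : forall n x, g1 n (f1 n x) = g2 n (f2 n x).

Definition cmp_p : pmap (glue_ps f1 f2) D.
Proof.
unshelve refine
  (@PMap _ _ (@SMap (glue_ps f1 f2) D (fun n S => copair g1 g2 (rep S)) _) _).
- move=> m n f S /=; rewrite -copair_act.
  by apply: (copair_glued comm); apply: rep_cls.
- by move=> n /=; rewrite (copair_glued comm (rep_cls _ _ _)) /= pm_pt.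
Defined.

Lemma cmp_cls n (p : (B n + C n)%type) : cmp_p n (cls f1 f2 p) = copair g1 g2 p.
Proof. by apply: (copair_glued comm); apply: rep_cls. Qed.

Definition cmp : cmor (glue f1 f2) D.
Proof.
refine (@CMor X (glue f1 f2) D cmp_p _) => n S.
case: (cls_surj S) => -[b|c] ->;
  rewrite cmp_cls coact_glue_cls /gco_rep /copair cm_co smmap_comp;
  apply: smmap_ext => y; symmetry.
- exact: (cmp_cls (inl y)).
- exact: (cmp_cls (inr y)).
Defined.

End Comparison.

(** In a pushout square the comparison map is inverse to the factorisation of
    the gluing cocone; hence every pushout is a levelwise pushout. *)
Lemma levelwise_of_pushout (X : sset) (A B C D : comod X)
    (f1 : cmor A B) (f2 : cmor A C) (g1 : cmor B D) (g2 : cmor C D) :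
  is_pushout f1 f2 g1 g2 -> levelwise_pushout f1 f2 g1 g2.
Proof.
case=> comm UP.
have [v [v1 [v2 _]]] := UP _ (inj1 f1 f2) (inj2 f1 f2) (inj_glued f1 f2).
have v_copair n (p : (B n + C n)%type) : v n (copair g1 g2 p) = cls f1 f2 p.
  by case: p => [b|c] /=; [rewrite v1 | rewrite v2].
split=> // [n d|n p q e]; last by apply: cls_inj; rewrite -!v_copair e.
have [w [_ [_ w_uniq]]] := UP _ _ _ comm.
have id_w := w_uniq (cid D) (fun _ _ => erefl) (fun _ _ => erefl) n d.
have cmp_v_w := w_uniq (ccomp v (cmp comm)) _ _ n d.
exists (rep (v n d)); rewrite /= in id_w cmp_v_w; rewrite {2}id_w -cmp_v_w //.
- by move=> m b /=; rewrite v1; apply: (cmp_cls comm (inl b)).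
- by move=> m c /=; rewrite v2; apply: (cmp_cls comm (inr c)).
Qed.

(** Conversely, a cocone [h1, h2] on a levelwise pushout descends along the
    surjection [copair g1 g2], because its kernel is the gluing relation, which
    the cocone respects. *)
Section Descent.
Variables (X : sset) (A B C D : comod X).
Variables (f1 : cmor A B) (f2 : cmor A C) (g1 : cmor B D) (g2 : cmor C D).
Hypothesis surj : forall n (d : D n), exists p, copair g1 g2 p = d.
Hypothesis kern : forall n (p q : (B n + C n)%type),
  copair g1 g2 p = copair g1 g2 q -> glued f1 f2 p q.
Variables (W : comod X) (h1 : cmor B W) (h2 : cmor C W).
Hypothesis hA : forall n x, h1 n (f1 n x) = h2 n (f2 n x).

Definition preim n (d : D n) : (B n + C n)%type :=
  proj1_sig (constructive_indefinite_description _ (surj d)).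

Lemma preimK n (d : D n) : copair g1 g2 (preim d) = d.
Proof. exact: (proj2_sig (constructive_indefinite_description _ (surj d))). Qed.

Lemma copair_preim n (p : (B n + C n)%type) :
  copair h1 h2 (preim (copair g1 g2 p)) = copair h1 h2 p.
Proof. by apply: (copair_glued hA); apply: kern; rewrite preimK. Qed.

Definition descend_p : pmap D W.
Proof.
unshelve refine (@PMap D W (@SMap D W (fun n d => copair h1 h2 (preim d)) _) _).
- move=> m n f d /=; case: (surj d) => p <-.
  by rewrite -copair_act !copair_preim copair_act.
- move=> n /=; rewrite -(pm_pt g1 n) -[g1 n _]/(copair g1 g2 (inl _)).
  by rewrite copair_preim /= pm_pt.
Defined.

Lemma descend_copair n (p : (B n + C n)%type) :
  descend_p n (copair g1 g2 p) = copair h1 h2 p.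
Proof. exact: copair_preim. Qed.

Definition descend : cmor D W.
Proof.
refine (@CMor X D W descend_p _) => n d.
case: (surj d) => -[b|c] <-;
  rewrite descend_copair /copair !cm_co smmap_comp;
  apply: smmap_ext => y; symmetry.
- exact: (descend_copair (inl y)).
- exact: (descend_copair (inr y)).
Defined.

End Descent.

(** Every levelwise pushout is a pushout; uniqueness holds because
    [copair g1 g2] is surjective. *)
Lemma pushout_of_levelwise (X : sset) (A B C D : comod X)
    (f1 : cmor A B) (f2 : cmor A C) (g1 : cmor B D) (g2 : cmor C D) :
  levelwise_pushout f1 f2 g1 g2 -> is_pushout f1 f2 g1 g2.
Proof.
case=> comm surj kern; split=> // W h1 h2 hA.
have desc_copair := descend_copair surj kern hA.
exists (descend surj kern hA); split; [|split].
- by move=> n b; apply: (desc_copair n (inl b)).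
- by move=> n c; apply: (desc_copair n (inr c)).
- move=> v v1 v2 n d; case: (surj n d) => -[b|c] <-; rewrite desc_copair /=.
  + exact: v1.
  + exact: v2.
Qed.

(** ** Simplices of a pulled-back comodule
    A non-basepoint [n]-simplex of [a^*Y] is a pair [(y, y /\ x')] such that
    the coaction of [y] is [y /\ a x']; we say that [x'] lifts the label of [y]. *)
Section PullbackSimplices.
Variables (X X' : sset) (a : smap X' X).

Definition pb_mem (Y : comod X) n (y : Y n) (x' : X' n) : Prop :=
  coact Y n y = smmap (pid Y) a n (smk y x').

Lemma pb_memE (Y : comod X) n (y : Y n) x' :
  pb_mem y x' <-> coact Y n y = smk y (a n x').
Proof. by rewrite /pb_mem /= smmap_smk. Qed.

Lemma pb_mem_map (Y Z : comod X) (phi : cmor Y Z) n (y : Y n) x' :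
  pb_mem y x' -> pb_mem (phi n y) x'.
Proof. by move/pb_memE => e; apply/pb_memE; rewrite cm_co e /= smmap_smk. Qed.

Lemma pb_mem_reflect (Y Z : comod X) (phi : cmor Y Z) n (y : Y n) x' :
  phi n y <> ptt Z n -> pb_mem (phi n y) x' -> pb_mem y x'.
Proof.
move=> nb /pb_memE e; apply/pb_memE.
case: (coact_label y) => [[ey _]|[x ex]]; first by case: nb; rewrite ey pm_pt.
by rewrite cm_co ex /= smmap_smk in e; rewrite ex -(smk_inj nb e).
Qed.

Definition pb_el (Y : comod X) n (y : Y n) x' (e : pb_mem y x') : pb a Y n :=
  exist _ (y, smk y x') e.

Definition pb_lift (Y : comod X) n (y : Y n) (x' : X' n) : pb a Y n :=
  match excluded_middle_informative (pb_mem y x') with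
  | left e => pb_el e
  | right _ => ptt (pb a Y) n
  end.

Lemma pb_lift_el (Y : comod X) n (y : Y n) x' (e : pb_mem y x') :
  pb_lift y x' = pb_el e.
Proof.
rewrite /pb_lift; case: excluded_middle_informative => // e'.
by rewrite (proof_irrelevance _ e e').
Qed.

Lemma pb_lift_pt (Y : comod X) n x' : pb_lift (ptt Y n) x' = ptt (pb a Y) n.
Proof.
rewrite /pb_lift; case: excluded_middle_informative => // e.
by apply: sig_eqP; rewrite /= smk_pt.
Qed.

Lemma pbmor_lift (Y Z : comod X) (phi : cmor Y Z) n (y : Y n) x' :
  pbmor a phi n (pb_lift y x') = pb_lift (phi n y) x'.
Proof.
case: (classic (pb_mem y x')) => [e|ne].
  rewrite (pb_lift_el e) (pb_lift_el (pb_mem_map phi e)).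
  by apply: sig_eqP; rewrite /= smmap_smk.
rewrite {1}/pb_lift; case: excluded_middle_informative => // _; rewrite pm_pt.
case: (classic (phi n y = ptt Z n)) => [->|nb]; first by rewrite pb_lift_pt.
rewrite /pb_lift; case: excluded_middle_informative => // e.
by case: ne; apply: pb_mem_reflect e.
Qed.

Lemma pb_cases (Y : comod X) n (w : pb a Y n) :
  w = ptt (pb a Y) n \/ exists x', w = pb_lift (proj1_sig w).1 x'.
Proof.
case: w => -[y z] e; case: (sm_case z) => [ez|[y' [x' ez]]]; subst z.
  by left; apply: pb_none.
case: (classic (y' = ptt Y n)) => [ey'|ny'].
  by left; apply: pb_none; rewrite /= ey' smk_pt.
have ey : y = y'.
  by have := counit y; rewrite /= in e; rewrite e /= smmap_smk scu_smk.
subst y'; right; exists x'; rewrite /= (pb_lift_el (e : pb_mem y x')).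
exact: sig_eqP.
Qed.

Lemma pb_lift_inj (Y : comod X) n (y1 y2 : Y n) (x1 x2 : X' n) :
  pb_lift y1 x1 = pb_lift y2 x2 -> pb_lift y1 x1 <> ptt (pb a Y) n ->
  y1 = y2 /\ x1 = x2.
Proof.
rewrite /pb_lift.
case: excluded_middle_informative => [e1|_]; last by move=> _ [].
case: excluded_middle_informative => [e2|_] eq12 nb; last by case: nb.
move: eq12 => /(congr1 (fun w => proj1_sig w)) [<-] e; split => //.
by apply: smk_inj e => ey; apply: nb; apply: sig_eqP; rewrite /= ey smk_pt.
Qed.

End PullbackSimplices.

(** ** [a^*] preserves levelwise pushouts
    Lifting a label [x'] along a gluing chain in [B n + C n] gives a gluing
    chain in [a^*B n + a^*C n]; this transports surjectivity and the kernel of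
    the copairing from the original square to the pulled-back one. *)
Section PullbackSquare.
Variables (X X' : sset) (a : smap X' X) (A B C D : comod X).
Variables (f1 : cmor A B) (f2 : cmor A C) (g1 : cmor B D) (g2 : cmor C D).

Definition sum_lift n (p : (B n + C n)%type) (x' : X' n) : (pb a B n + pb a C n)%type :=
  match p with inl b => inl (pb_lift a b x') | inr c => inr (pb_lift a c x') end.

Definition sum_fst n (P : (pb a B n + pb a C n)%type) : (B n + C n)%type :=
  match P with inl w => inl (proj1_sig w).1 | inr w => inr (proj1_sig w).1 end.

Lemma sum_lift_glued n (p q : (B n + C n)%type) x' :
  glued f1 f2 p q ->
  glued (pbmor a f1) (pbmor a f2) (sum_lift p x') (sum_lift q x').
Proof.
elim=> {p q} [x|p|p q _ IH|p q r _ IH1 _ IH2].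
- by rewrite /sum_lift -(pbmor_lift a f1) -(pbmor_lift a f2); apply: glued_gen.
- exact: glued_refl.
- exact: glued_sym.
- exact: glued_trans IH1 IH2.
Qed.

Lemma copair_sum_lift n (p : (B n + C n)%type) x' :
  copair (pbmor a g1) (pbmor a g2) (sum_lift p x') = pb_lift a (copair g1 g2 p) x'.
Proof. by case: p => [b|c]; apply: pbmor_lift. Qed.

Lemma copair_sum_fst n (P : (pb a B n + pb a C n)%type) :
  (proj1_sig (copair (pbmor a g1) (pbmor a g2) P)).1 = copair g1 g2 (sum_fst P).
Proof. by case: P. Qed.

Lemma sum_lift_cases n (P : (pb a B n + pb a C n)%type) :
  (exists x', P = sum_lift (sum_fst P) x')
  \/ glued (pbmor a f1) (pbmor a f2) P (sum_pt (pb a B) (pb a C) n).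
Proof.
case: P => w; case: (pb_cases w) => [->|[x' ew]].
- by right; apply: glued_refl.
- by left; exists x'; rewrite /= {1}ew.
- by right; apply: glued_sym; apply: glued_pt.
- by left; exists x'; rewrite /= {1}ew.
Qed.

Hypothesis comm : forall n x, g1 n (f1 n x) = g2 n (f2 n x).
Hypothesis kern : forall n (p q : (B n + C n)%type),
  copair g1 g2 p = copair g1 g2 q -> glued f1 f2 p q.

Lemma pb_comm n (w : pb a A n) :
  pbmor a g1 n (pbmor a f1 n w) = pbmor a g2 n (pbmor a f2 n w).
Proof.
case: (pb_cases w) => [->|[x' ->]]; first by rewrite !pm_pt.
by rewrite !pbmor_lift comm.
Qed.

Lemma pb_kern_pt n (P : (pb a B n + pb a C n)%type) :
  copair (pbmor a g1) (pbmor a g2) P = ptt (pb a D) n ->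
  glued (pbmor a f1) (pbmor a f2) P (sum_pt (pb a B) (pb a C) n).
Proof.
move=> eP; case: (sum_lift_cases P) => [[x' ->]|//].
have fst_pt : copair g1 g2 (sum_fst P) = copair g1 g2 (sum_pt B C n).
  by rewrite -copair_sum_fst eP /= pm_pt.
have := sum_lift_glued x' (kern fst_pt).
by rewrite /= pb_lift_pt.
Qed.

End PullbackSquare.

(** For the kernel,
    two simplices with the same non-basepoint image are lifts of simplices
    with the same image in [D] and the same label, hence glued. *)
Lemma pb_levelwise (X X' : sset) (a : smap X' X) (A B C D : comod X)
    (f1 : cmor A B) (f2 : cmor A C) (g1 : cmor B D) (g2 : cmor C D) :
  levelwise_pushout f1 f2 g1 g2 ->
  levelwise_pushout (pbmor a f1) (pbmor a f2) (pbmor a g1) (pbmor a g2).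
Proof.
case=> comm surj kern; split; first exact: pb_comm.
- move=> n w; case: (pb_cases w) => [->|[x' ->]].
    by exists (inl (ptt (pb a B) n)); apply: (pm_pt (pbmor a g1)).
  have [p ep] := surj n (proj1_sig w).1.
  by exists (sum_lift a p x'); rewrite copair_sum_lift ep.
- move=> n P Q e.
  case: (classic (copair (pbmor a g1) (pbmor a g2) P = ptt (pb a D) n)) => [eP|nP].
    apply: glued_trans (pb_kern_pt kern eP) (glued_sym (pb_kern_pt kern _)).
    by rewrite -e.
  have glued_base_ne R :
      glued (pbmor a f1) (pbmor a f2) R (sum_pt (pb a B) (pb a C) n) ->
      copair (pbmor a g1) (pbmor a g2) R <> ptt (pb a D) n -> False.
    by move=> /(copair_glued (pb_comm comm)) -> []; apply: (pm_pt (pbmor a g1)).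
  case: (sum_lift_cases f1 f2 P) => [[x' eP]|/glued_base_ne //].
  case: (sum_lift_cases f1 f2 Q) => [[y' eQ]|/glued_base_ne]; last by rewrite -e.
  move: e nP; rewrite eP eQ !copair_sum_lift => e /(pb_lift_inj e) [/kern pq <-].
  exact: sum_lift_glued.
Qed.

Theorem corollary3p4 (X X' : sset) (a : smap X' X) (A B C D : comod X)
  (f1 : cmor A B) (f2 : cmor A C) (g1 : cmor B D) (g2 : cmor C D) :
  is_pushout f1 f2 g1 g2 ->
  is_pushout (pbmor a f1) (pbmor a f2) (pbmor a g1) (pbmor a g2).
Proof.
by move=> /levelwise_of_pushout /(pb_levelwise a) /pushout_of_levelwise.
Qed.
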